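(* Let $\mathcal G$ be a Kac–Moody Lie algebra and $A=\mathbb C[t_1^{\pm1},\dots,t_n^{\pm1}]$. Let $N_1,\dots,N_n$ be positive integers, for each $j$ let $a_{j1},\dots,a_{jN_j}$ be distinct non-zero complex numbers, and for each multi-index $I=(i_1,\dots,i_n)$, $1\le i_j\le N_j$, let $\lambda_I\in\mathfrak h^*$ be dominant, with not all $\lambda_I$ equal to zero. Define $\psi(h\otimes t^{\underline m})=\sum_I a_I^{\underline m}\lambda_I(h)$ for $h\in\mathfrak h'$, $\psi(h)=\sum_I\lambda_I(h)$ for $h\in\mathfrak h''$, where $a_I^{\underline m}=\prod_ja_{ji_j}^{m_j}$, and let $\bar\psi:U(H)\to A$ be the $\mathbb Z^n$-graded algebra homomorphism with $\bar\psi(h\otimes t^{\underline m})=\psi(h\otimes t^{\underline m})t^{\underline m}$ and $\bar\psi(h)=\psi(h)$ for $h\in\mathfrak h''$. Then the image $A_{\bar\psi}$ of $\bar\psi$ is an irreducible $\tilde{\mathfrak h}_A$-module.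
   Context: $\mathcal G$ is a Kac–Moody Lie algebra with Cartan subalgebra $\mathfrak h$ and simple coroots $\alpha_i^\vee$; $\mathcal G'=[\mathcal G,\mathcal G]$, $\mathfrak h'=\mathfrak h\cap\mathcal G'$, $\mathfrak h''$ a complement with $\mathfrak h=\mathfrak h'\oplus\mathfrak h''$. A weight $\lambda\in\mathfrak h^*$ is dominant if $\lambda(\alpha_i^\vee)$ is a non-negative real number for each $i$. $t^{\underline m}=t_1^{m_1}\cdots t_n^{m_n}$. $H=\mathfrak h'\otimes A\oplus\mathfrak h''$ is an abelian Lie algebra, $\mathbb Z^n$-graded ($h\otimes t^{\underline m}$ in degree $\underline m$, $\mathfrak h''$ in degree $0$), and $\tilde{\mathfrak h}_A=H\oplus\mathrm{span}(d_1,\dots,d_n)$ (abelian). $A_{\bar\psi}$ is a $\tilde{\mathfrak h}_A$-module where $x\in H$ acts by multiplication by $\bar\psi(x)$ and $d_i t^{\underline s}=s_it^{\underline s}$. *)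

From HB Require Import structures.
From mathcomp Require Import all_boot all_order all_algebra.
From mathcomp Require Import finmap reals.
From mathcomp.real_closed Require Import complex.
From mathcomp.multinomials Require Import monalg.

Set Implicit Arguments.
Unset Strict Implicit.
Unset Printing Implicit Defensive.

Import GRing.Theory Num.Theory.
Local Open Scope ring_scope.

(* Complex numbers: C = R[i] for R : realType (any realType is the real
   line, so R[i] is the field of complex numbers). *)

(* Cartan data of a Kac--Moody algebra: a realization (h, Pi, Pi^v) of a *)
(* generalized Cartan matrix A (Kac, Ch. 1).  Convention a_ij = alpha_j(alpha_i^v). *)
Record KMrealization (R : realType) (h : vectType R[i]) := {
  km_l : nat;
  km_A : 'M[int]_km_l;
  km_diag : forall i, km_A i i = 2;
  km_offdiag : forall i j, i != j -> km_A i j <= 0;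
  km_zero_sym : forall i j, (km_A i j == 0) = (km_A j i == 0);
  km_coroot : 'I_km_l -> h;
  km_root : 'I_km_l -> 'Hom(h, R[i]^o);
  km_coroot_free : free [seq km_coroot i | i <- enum 'I_km_l];
  km_root_free : free [seq km_root i | i <- enum 'I_km_l];
  km_pairing : forall i j, km_root j (km_coroot i) = (km_A i j)%:~R :> R[i];
  km_dim : \dim (fullv : {vspace h}) =
             (2 * km_l - \rank (map_mx (intr : int -> R[i]) km_A))%N
}.

(* h' = h \cap [G,G] = span of the simple coroots *)
Definition hprime (R : realType) (h : vectType R[i]) (K : KMrealization h)
  : {vspace h} :=
  <<[seq @km_coroot _ _ K i | i <- enum 'I_(km_l K)]>>%VS.

(* dominant weight: lambda(alpha_i^v) is a non-negative real number *)
Definition dominant (R : realType) (h : vectType R[i]) (K : KMrealization h)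
  (lam : 'Hom(h, R[i]^o)) : Prop :=
  forall i, 0 <= (lam (@km_coroot _ _ K i) : R[i]).

(* A = C[t_1^{+-1},...,t_n^{+-1}] : the group algebra of Z^n, realised as *)
(* finitely supported functions Z^n -> C ({malg C[Z^n]}); t^m = << m >>. *)
Definition Laurent (R : realType) (n : nat) := {malg R[i]['rV[int]_n]}.

Definition lmul (R : realType) (n : nat) (f g : Laurent R n) : Laurent R n :=
  \sum_(k <- msupp f) \sum_(l <- msupp g) << f@_k * g@_l *g (k + l) >>.

Definition dop (R : realType) (n : nat) (i : 'I_n) (f : Laurent R n)
  : Laurent R n :=
  \sum_(k <- msupp f) << (k ord0 i)%:~R * f@_k *g k >>.

Section Psi.
Variables (R : realType) (h : vectType R[i]) (n : nat) (N : 'I_n -> nat).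
Variable (a : forall j : 'I_n, 'I_(N j) -> R[i]).
Variable (lam : {dffun forall j : 'I_n, 'I_(N j)} -> 'Hom(h, R[i]^o)).

Definition aI (I : {dffun forall j : 'I_n, 'I_(N j)}) (m : 'rV[int]_n) : R[i] :=
  \prod_(j < n) (a (I j)) ^ (m ord0 j).

Definition psi1 (x : h) (m : 'rV[int]_n) : R[i] :=
  \sum_I aI I m * (lam I x : R[i]).

Definition psi2 (x : h) : R[i] := \sum_I (lam I x : R[i]).

Definition psibar1 (x : h) (m : 'rV[int]_n) : Laurent R n :=
  psi1 x m *: << m >>.
Definition psibar2 (x : h) : Laurent R n := psi2 x *: << 0 >>.

Variables (hp hpp : {vspace h}).

(* A_psibar = psibar(U(H)) = the unital subalgebra of A generated by psibar(H) *)
Inductive Apsibar : Laurent R n -> Prop :=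
  | Ap_one : Apsibar << 0 >>
  | Ap_gen1 x m : x \in hp -> Apsibar (psibar1 x m)
  | Ap_gen2 x : x \in hpp -> Apsibar (psibar2 x)
  | Ap_add f g : Apsibar f -> Apsibar g -> Apsibar (f + g)
  | Ap_scale c f : Apsibar f -> Apsibar (c *: f)
  | Ap_mul f g : Apsibar f -> Apsibar g -> Apsibar (lmul f g).

(* An element of htilde_A = (h' (x) A) (+) h'' (+) span(d_1..d_n) is given by  *)
(* a finite list s of pairs (x,m) with x in h' (standing for sum x (x) t^m),   *)
(* an element y of h'' and coefficients c of the d_i.  Its action on A_psibar: *)
Definition htact (s : seq (h * 'rV[int]_n)) (y : h) (c : 'I_n -> R[i])
  (f : Laurent R n) : Laurent R n :=
  \sum_(p <- s) lmul (psibar1 p.1 p.2) f + psi2 y *: f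
  + \sum_(j < n) c j *: dop j f.

Definition htsubmodule (W : Laurent R n -> Prop) : Prop :=
  [/\ forall f, W f -> Apsibar f,
      W 0,
      forall f g, W f -> W g -> W (f + g),
      forall (c : R[i]) f, W f -> W (c *: f) &
      forall s y c f, all (fun p => p.1 \in hp) s -> y \in hpp ->
        W f -> W (htact s y c f)].

Definition Apsibar_irreducible : Prop :=
  (exists f, Apsibar f /\ f != 0) /\
  forall W, htsubmodule W ->
    (forall f, W f -> f = 0) \/ (forall f, Apsibar f -> W f).

End Psi.

From HB Require Import structures.
From mathcomp Require Import all_boot all_order all_algebra.
From mathcomp Require Import finmap reals.
From mathcomp.real_closed Require Import complex.
From mathcomp.multinomials Require Import monalg.
From mathcomp Require Import ring zify.
From Stdlib Require Import Classical.
Import GRing.Theory Num.Theory.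
Local Open Scope ring_scope.

(* A nonzero submodule W of A_psibar contains a monomial c t^k: the degree
   derivations act diagonally on monomials, so if two degrees in the support of
   f in W differ in coordinate j and t^k is a term of f, then (d_j - k_j) f is
   a nonzero element of W with smaller support.  The support of A_psibar lies
   in the monoid S generated by the degrees s with psi(x (x) t^s) <> 0 for some
   x in h', and multiplying by psibar(x (x) t^s) moves a monomial of W from
   degree k to s + k.  S is a group: as a function of p in Z,
   psi(x (x) t^(p s)) = sum_I lambda_I(x) (a_I^s)^p is an exponential sum with
   nonzero bases, so it cannot vanish at all p < 0 without vanishing at p = 1.
   Hence from c t^k, W reaches every monomial in the support of A_psibar, and
   W = A_psibar. *)

Lemma geometric_int_eq0 {R : idomainType} {g : int -> R} {u : R} {t0 : int} :
  u != 0 -> (forall t, g (t + 1) = u * g t) -> g t0 = 0 -> forall t, g t = 0.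
Proof.
move=> u_nz g_rec g_t0.
have g_succ t : (g (t + 1) == 0) = (g t == 0) by rewrite g_rec mulf_eq0 (negbTE u_nz).
have g_up (k : nat) : g (t0 + k%:Z) = 0.
  elim: k => [|k IHk]; rewrite ?addr0 //.
  by rewrite -addn1 PoszD addrA; apply/eqP; rewrite g_succ IHk.
have g_down (k : nat) : g (t0 - k%:Z) = 0.
  elim: k => [|k IHk]; rewrite ?subr0 //; apply/eqP; rewrite -g_succ -IHk.
  by rewrite -addn1 PoszD opprD addrA subrK.
move=> t; rewrite -(subrKC t0 t); case: (t - t0) => k; first exact: g_up.
by rewrite NegzE g_down.
Qed.

Lemma expsum_eq0 {F : fieldType} {I : Type} (r : seq I) (w u : I -> F) (t0 : int) :
  (forall i, u i != 0) ->
  (forall j, (j < size r)%N -> \sum_(i <- r) w i * u i ^ (t0 + j%:Z) = 0) ->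
  forall t, \sum_(i <- r) w i * u i ^ t = 0.
Proof.
move=> u_nz; elim: r w => [|i0 r IHr] w vanish t; first by rewrite big_nil.
pose g t := \sum_(i <- i0 :: r) w i * u i ^ t.
have g_diff s : g (s + 1) - u i0 * g s = \sum_(i <- r) w i * (u i - u i0) * u i ^ s.
  have termE i :
      w i * (u i - u i0) * u i ^ s = w i * u i ^ (s + 1) - u i0 * (w i * u i ^ s).
    by rewrite expfzDr // expr1z; ring.
  rewrite (eq_bigr _ (fun i _ => termE i)) sumrB -mulr_sumr /g !big_cons.
  rewrite expfzDr // expr1z; ring.
have g_rec s : g (s + 1) = u i0 * g s.
  apply/eqP; rewrite -subr_eq0 g_diff; apply/eqP; apply: (IHr _ _ s) => j lt_j_r.
  rewrite -g_diff -addrA -(PoszD j 1) addn1 /g.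
  by rewrite !vanish ?mulr0 ?subrr //= ltnS // ltnW.
have g_t0 : g t0 = 0 by rewrite /g -[t0]addr0 vanish.
exact: (geometric_int_eq0 (u_nz i0) g_rec g_t0 t).
Qed.

Section LaurentCoefficients.
Variables (R : realType) (n : nat).
Local Set Implicit Arguments.
Local Unset Strict Implicit.
Local Notation L := (Laurent R n).
Local Notation Z_n := 'rV[int]_n.

(* Rewriting with the generic [mcoeffZ] on [L] makes unification very slow. *)
Lemma laurent_coefZ (c : R[i]) (f : L) m : (c *: f)@_m = c * f@_m.
Proof. exact: mcoeffZ. Qed.

(* [msupp_eq0] of monalg needs a monomType, and Z^n is not given one here. *)
Lemma laurent_msupp_eq0 (f : L) : (msupp f == fset0) = (f == 0).
Proof.
apply/eqP/eqP => [supp_f|->]; last exact: msupp0.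
by apply/malgP => m; rewrite mcoeff0 mcoeff_outdom // supp_f inE.
Qed.

Lemma monalgUZ (c d : R[i]) (k : Z_n) : c *: (<< d *g k >> : L) = << c * d *g k >>.
Proof. by apply/malgP => m; rewrite laurent_coefZ [RHS]mcoeffU mcoeffU mulrnAr. Qed.

Lemma lmulUU (c d : R[i]) (k l : Z_n) :
  lmul (<< c *g k >> : L) << d *g l >> = << c * d *g (k + l) >>.
Proof.
rewrite /lmul !msuppU.
have [->|c_nz] := eqP; first by rewrite big_seq_fset0 mul0r monalgU0.
have [->|d_nz] := eqP; first by rewrite big_seq_fset1 big_seq_fset0 mulr0 monalgU0.
by rewrite !big_seq_fset1 !mcoeffUU.
Qed.

Lemma msupp_sum (I : eqType) (r : seq I) (F : I -> L) m :
  m \in msupp (\sum_(i <- r) F i) -> exists2 i, i \in r & m \in msupp (F i).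
Proof.
rewrite big_seq; apply: (big_ind (fun f : L => m \in msupp f -> _)).
- by rewrite msupp0 inE.
- move=> f g f_in g_in /(fsubsetP (msuppD_le f g)); rewrite inE.
  by case/orP; [exact: f_in | exact: g_in].
- by move=> i r_i m_Fi; exists i.
Qed.

Lemma msupp_lmul (f g : L) m : m \in msupp (lmul f g) ->
  exists2 k, k \in msupp f & exists2 l, l \in msupp g & m = k + l.
Proof.
case/msupp_sum=> k f_k /msupp_sum[l g_l m_kl]; exists k => //; exists l => //.
by move/(fsubsetP msuppU_le): m_kl; rewrite inE => /eqP.
Qed.

Lemma dop_coef j (f : L) m : (dop j f)@_m = (m ord0 j)%:~R * f@_m.
Proof.
rewrite /dop (raddf_sum (mcoeff m)) /=; under eq_bigr do rewrite mcoeffU.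
case: msuppP => [f_m | f_m].
  rewrite (bigD1_seq m) ?fset_uniq //= eqxx big1 ?addr0 // => k /negbTE->.
  by rewrite mulr0n.
rewrite mulr0 big_seq big1 // => k f_k.
by case: eqP => [k_m|]; rewrite ?mulr0n //; move: f_m; rewrite -k_m f_k.
Qed.

Lemma msupp_dop_shift j (k : Z_n) (f : L) :
  msupp (dop j f - (k ord0 j)%:~R *: f) =
  [fset m in msupp f | m ord0 j != k ord0 j]%fset.
Proof.
apply/fsetP => m; rewrite !inE /= -!mcoeff_neq0 (mcoeffB m).
(* Generalizing [dop j f] keeps the unifier from unfolding it against [_ *: f]. *)
move: (dop_coef j f m); move: (dop j f) => D ->.
by rewrite laurent_coefZ -mulrBl mulf_eq0 subr_eq0 eqr_int negb_or andbC.
Qed.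

Lemma monalg_supp1 (f : L) k : (msupp f `<=` [fset k])%fset -> f = << f@_k *g k >>.
Proof. by move=> supp_f; rewrite {1}(monalgEw supp_f) big_seq_fset1. Qed.

End LaurentCoefficients.

Section ApsibarModule.
Variables (R : realType) (h : vectType R[i]) (n : nat) (N : 'I_n -> nat).
Variable (a : forall j : 'I_n, 'I_(N j) -> R[i]).
Variable (lam : {dffun forall j : 'I_n, 'I_(N j)} -> 'Hom(h, R[i]^o)).
Variables (hp hpp : {vspace h}).
Local Set Implicit Arguments.
Local Unset Strict Implicit.
Local Notation L := (Laurent R n).
Local Notation Z_n := 'rV[int]_n.
Local Notation psi1 := (psi1 a lam).

Inductive psi_monoid : Z_n -> Prop :=
  | psi_monoid0 : psi_monoid 0
  | psi_monoid_cons {x s m} :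
      x \in hp -> psi1 x s != 0 -> psi_monoid m -> psi_monoid (s + m).

Lemma psi_monoidD m m' : psi_monoid m -> psi_monoid m' -> psi_monoid (m + m').
Proof.
elim=> [|x s {}m hp_x psi_s _ IHm] psi_m'; first by rewrite add0r.
by rewrite -addrA; exact: psi_monoid_cons hp_x psi_s (IHm psi_m').
Qed.

Lemma psi_monoid_gen x s : x \in hp -> psi1 x s != 0 -> psi_monoid s.
Proof.
by move=> hp_x psi_s; rewrite -[s]addr0; exact: psi_monoid_cons hp_x psi_s psi_monoid0.
Qed.

Lemma psi_monoidMn m k : psi_monoid m -> psi_monoid (m *+ k).
Proof.
move=> psi_m; elim: k => [|k IHk]; first exact: psi_monoid0.
by rewrite mulrS; apply: psi_monoidD.
Qed.

Lemma aIZ I (t : int) (s : Z_n) : aI a I (t *: s) = aI a I s ^ t.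
Proof.
rewrite /aI (big_morph (fun x => x ^ t) (fun x y => expfzMl x y t) (exp1rz _ t)).
by apply: eq_bigr => j _; rewrite mxE exprz_exp mulrC.
Qed.

Lemma psi1Z x (t : int) s :
  psi1 x (t *: s) = \sum_I (lam I x : R[i]) * aI a I s ^ t.
Proof. by apply: eq_bigr => I _; rewrite aIZ mulrC. Qed.

Hypothesis a_neq0 : forall j k, a j k != 0.

Lemma aI_neq0 I s : aI a I s != 0.
Proof. by rewrite prodf_seq_neq0; apply/allP => j _; rewrite expfz_neq0. Qed.

(* By [psi1Z] and [expsum_eq0], vanishing for [t = -d, ..., -1], with [d]
   the number of multi-indices, would force vanishing at [t = 1]. *)
Lemma psi1_neg_multiple x s : psi1 x s != 0 ->
  exists k : nat, psi1 x (- k.+1%:Z *: s) != 0.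
Proof.
move=> psi_s; set d := #|{dffun forall j : 'I_n, 'I_(N j)}|.
have [/existsP[j psi_j] | /existsPn psi0] :=
  boolP [exists j : 'I_d, psi1 x (- (d - j)%:Z *: s) != 0].
  by exists (d - j).-1; rewrite prednK // subn_gt0.
case/negP: psi_s; rewrite -[s]scale1r psi1Z; apply/eqP.
apply: (expsum_eq0 _ _ _ (- d%:Z)) => [I|j]; first exact: aI_neq0.
have -> : size (index_enum {dffun forall j : 'I_n, 'I_(N j)}) = d.
  by rewrite /d cardT enumT [index_enum _]unlock.
move=> lt_j_d.
have := psi0 (Ordinal lt_j_d); rewrite negbK -psi1Z => /eqP <-.
by congr (psi1 x (_ *: s)); rewrite /=; lia.
Qed.

Lemma psi_monoid_opp_gen x s : x \in hp -> psi1 x s != 0 -> psi_monoid (- s).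
Proof.
move=> hp_x psi_s; have [k psi_k] := psi1_neg_multiple psi_s.
have -> : - s = s *+ k + (- k.+1%:Z) *: s.
  by rewrite scaleNr -natz scaler_nat mulrSr opprD addrA subrr add0r.
by apply: psi_monoidD; [apply: psi_monoidMn |]; exact: psi_monoid_gen hp_x _.
Qed.

Lemma psi_monoidN m : psi_monoid m -> psi_monoid (- m).
Proof.
elim=> [|x s {}m hp_x psi_s _ IHm]; first by rewrite oppr0; exact: psi_monoid0.
by rewrite opprD; apply: psi_monoidD IHm; exact: psi_monoid_opp_gen hp_x psi_s.
Qed.

Local Notation Apsibar := (Apsibar a lam hp hpp).

Lemma Apsibar_supp f m : Apsibar f -> m \in msupp f -> psi_monoid m.
Proof.
move=> Ap_f; elim: Ap_f m => {f}.
- by move=> m; rewrite msuppU oner_eq0 inE => /eqP->; exact: psi_monoid0.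
- move=> x s hp_x m; rewrite /psibar1 msuppZ msuppU oner_eq0.
  case: eqP => [_|/eqP psi_s]; rewrite inE // => /eqP->.
  exact: psi_monoid_gen hp_x psi_s.
- move=> x _ m; rewrite /psibar2 msuppZ msuppU oner_eq0.
  by case: eqP; rewrite inE // => _ /eqP->; exact: psi_monoid0.
- move=> f g _ IHf _ IHg m /(fsubsetP (msuppD_le f g)); rewrite inE.
  by case/orP; [exact: IHf | exact: IHg].
- by move=> c f _ IHf m /(fsubsetP (msuppZ_le c f)); exact: IHf.
- move=> f g _ IHf _ IHg m /msupp_lmul[k f_k [l g_l ->]].
  exact: psi_monoidD (IHf k f_k) (IHg l g_l).
Qed.

Lemma psi20 : psi2 lam 0 = 0.
Proof. by rewrite /psi2 big1 // => I _; rewrite linear0. Qed.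

Variable W : L -> Prop.
Hypothesis HW : htsubmodule a lam hp hpp W.

Lemma submodule_lmul x s f : x \in hp -> W f -> W (lmul (psibar1 a lam x s) f).
Proof.
case: HW => _ _ _ _ W_act hp_x W_f.
have := W_act [:: (x, s)] 0 (fun _ => 0) f _ (mem0v _) W_f; rewrite /= hp_x => /(_ isT).
rewrite /htact big_seq1 psi20 scale0r addr0 big1 ?addr0 // => j _.
by rewrite scale0r.
Qed.

Lemma submodule_dop j f : W f -> W (dop j f).
Proof.
case: HW => _ _ _ _ W_act W_f.
have := W_act [::] 0 (fun i => (i == j)%:R) f isT (mem0v _) W_f.
rewrite /htact big_nil add0r psi20 scale0r add0r (bigD1 j) //= eqxx scale1r.
by rewrite big1 ?addr0 // => i /negbTE->; rewrite scale0r.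
Qed.

Lemma submodule_monomial_rescale (c d : R[i]) k :
  c != 0 -> W << c *g k >> -> W << d *g k >>.
Proof.
case: HW => _ _ _ W_scale _ c_nz /(W_scale (d / c)).
by rewrite monalgUZ divfK.
Qed.

Lemma submodule_monomial_shift m (c : R[i]) k : psi_monoid m -> c != 0 ->
  W << c *g k >> -> forall d, W << d *g (m + k) >>.
Proof.
move=> psi_m c_nz W_ck; elim: psi_m => [|x s {}m hp_x psi_s _ IHm] d.
  by rewrite add0r; exact: submodule_monomial_rescale W_ck.
have := submodule_lmul s hp_x (IHm 1).
rewrite /psibar1 monalgUZ mulr1 lmulUU mulr1 addrA.
exact: submodule_monomial_rescale.
Qed.

Lemma submodule_monomial f :
  W f -> f != 0 -> exists (c : R[i]) (k : Z_n), c != 0 /\ W << c *g k >>.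
Proof.
have [_ _ W_add W_scale _] := HW.
have [d] := ubnP #|` msupp f|; elim: d f => // d IHd f lt_f_d W_f f_nz.
have /fset0Pn[k f_k] : msupp f != fset0 by rewrite laurent_msupp_eq0.
have [/monalg_supp1 f_k1 | /fsubsetPn[k' f_k' k'_k]] :=
  boolP (msupp f `<=` [fset k])%fset.
  by exists f@_k, k; rewrite -f_k1 mcoeff_neq0.
have /existsP[j k'_j] : [exists j, k' ord0 j != k ord0 j].
  apply: contraR k'_k => /existsPn same; rewrite inE; apply/eqP/rowP => j.
  by apply/eqP; rewrite -[_ == _]negbK same.
pose g := dop j f - (k ord0 j)%:~R *: f.
have supp_g : msupp g = [fset m in msupp f | m ord0 j != k ord0 j]%fset.
  exact: msupp_dop_shift.
apply: (IHd g).
- have sub_g : (msupp g `<=` msupp f `\ k)%fset.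
    apply/fsubsetP => m; rewrite supp_g !inE /= => /andP[f_m m_j].
    by rewrite f_m andbT; apply: contraNneq m_j => ->.
  apply: leq_ltn_trans (fsubset_leq_card sub_g) _.
  by move: lt_f_d; rewrite (cardfsD1 k) f_k add1n ltnS.
- by apply: W_add; [exact: submodule_dop | rewrite -scaleNr; exact: W_scale].
- apply/negP => /eqP g0; move: supp_g; rewrite g0 msupp0 => /fsetP/(_ k').
  by rewrite !inE f_k' k'_j.
Qed.

Lemma submodule_full (c : R[i]) k :
  c != 0 -> W << c *g k >> -> forall f, Apsibar f -> W f.
Proof.
have [W_Ap W0 W_add _ _] := HW.
move=> c_nz W_ck f Ap_f.
have psi_Nk : psi_monoid (- k).
  apply/psi_monoidN/(Apsibar_supp (W_Ap _ W_ck)).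
  by rewrite msuppU (negbTE c_nz) inE.
rewrite (monalgE f) big_seq; apply: big_ind => // m f_m.
rewrite -(subrK k m); apply: submodule_monomial_shift c_nz W_ck _.
exact: psi_monoidD (Apsibar_supp Ap_f f_m) psi_Nk.
Qed.

End ApsibarModule.

Theorem lemma3p16 (R : realType) (h : vectType R[i]) (K : KMrealization h)
  (hpp : {vspace h})
  (Hcompl : (hprime K + hpp)%VS = fullv)
  (Hdirect : directv (hprime K + hpp))
  (n : nat) (N : 'I_n -> nat) (HN : forall j, (0 < N j)%N)
  (a : forall j : 'I_n, 'I_(N j) -> R[i])
  (Ha_inj : forall j, injective (a j))
  (Ha_nz : forall j k, a j k != 0)
  (lam : {dffun forall j : 'I_n, 'I_(N j)} -> 'Hom(h, R[i]^o))
  (Hdom : forall I, dominant K (lam I))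
  (Hnz : exists I, lam I != 0) :
  Apsibar_irreducible a lam (hprime K) hpp.
Proof.
split.
  by exists << 0 >>; split; [exact: Ap_one | rewrite monalgU_eq0 oner_eq0].
move=> W HW; have [[f [W_f f_nz]] | W0] := classic (exists f, W f /\ f != 0).
  have [c [k [c_nz W_ck]]] := submodule_monomial HW W_f f_nz.
  by right => g; apply: (submodule_full Ha_nz HW c_nz W_ck).
by left => f W_f; apply/eqP/negPn/negP => f_nz; apply: W0; exists f.
Qed.
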